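(* Let $p$ be a ProbNetKAT program, $S=\mathcal{S}[\![p]\!]$ and $U$ as in the context. For all $a,b,b'\subseteq\mathsf{Pk}$, \[ \lim_{n\to\infty}\sum_{a'\subseteq\mathsf{Pk}} (S^n)_{(a,b),(a',b')} = (SU)^\infty_{(a,b),(\emptyset,b')}, \] where $(SU)^\infty:=\lim_{n\to\infty}(SU)^n$. In particular the limit on the left exists, and it can be computed exactly in closed form: writing $SU=\begin{bmatrix} I & 0\\ R & Q\end{bmatrix}$ with the absorbing states $(\emptyset,c)$ listed first, $(SU)^\infty=\begin{bmatrix} I & 0\\ (I-Q)^{-1}R & 0\end{bmatrix}$, a matrix with rational entries.
   Context: $\mathsf{Pk}$ is a finite set of packets; $[\varphi]$ is the Iverson bracket. For a ProbNetKAT program $p$ (with rational choice probabilities), $\mathcal{B}[\![p]\!]\in[0,1]^{2^{\mathsf{Pk}}\times 2^{\mathsf{Pk}}}$ is its stochastic matrix semantics ($\mathcal{B}[\![p]\!]_{ab}$ = probability of output set $b$ on input set $a$). The small-step matrix on states $(a,b)\in 2^{\mathsf{Pk}}\times 2^{\mathsf{Pk}}$ is $S_{(a,b),(a',b')}=[b'=b\cup a]\,\mathcal{B}[\![p]\!]_{a,a'}$. A state $(a,b)$ is saturated if whenever $(S^n)_{(a,b),(a',b')}>0$ for some $n\ge0$ we have $b'=b$. $U_{(a,b),(a',b')}=[b'=b][a'=\emptyset]$ if $(a,b)$ is saturated, and $[b'=b][a'=a]$ otherwise. In the block decomposition, $R$ gives transition probabilities from the non-absorbing (transient) states to the absorbing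 states and $Q$ those between transient states. *)

From HB Require Import structures.
From mathcomp Require Import all_boot all_order all_algebra.
From mathcomp Require Import all_classical all_reals all_analysis.
Set Implicit Arguments. Unset Strict Implicit. Unset Printing Implicit Defensive.
Import Order.TTheory GRing.Theory Num.Theory.
Import numFieldNormedType.Exports.
Local Open Scope ring_scope.
Local Open Scope classical_set_scope.

Section FMx.
Variables (T : finType) (R : pzRingType).
Definition fmx := T -> T -> R.
Definition fid : fmx := fun i j => (i == j)%:R.
Definition fmul (A B : fmx) : fmx := fun i j => \sum_(k : T) A i k * B k j.
Definition fpow (A : fmx) (n : nat) : fmx := iter n (fmul A) fid.
End FMx.

Definition state (Pk : finType) := ({set Pk} * {set Pk})%type.

Section Chain.
Variables (Pk : finType) (R : realType).
Variable B : {set Pk} -> {set Pk} -> R. (* big-step matrix B[[p]] *)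

Definition smallstep : fmx (state Pk) R :=
  fun s t => (t.2 == s.2 :|: s.1)%:R * B s.1 t.1.

Definition saturated (s : state Pk) : Prop :=
  forall (n : nat) (t : state Pk), 0 < fpow smallstep n s t -> t.2 = s.2.

Definition Umx : fmx (state Pk) R :=
  fun s t => if `[< saturated s >]
             then ((t.2 == s.2) && (t.1 == finset.set0))%:R
             else ((t.2 == s.2) && (t.1 == s.1))%:R.

(* absorbing states of SU are the (∅,c) *)
Definition absorbing (s : state Pk) : bool := s.1 == finset.set0.

Definition SUinf : fmx (state Pk) R :=
  fun s t => lim ((fun n : nat => (fpow (fmul smallstep Umx) n s t : R)) @ \oo).
End Chain.

(* As the b-component never changes along an
   S-path from a saturated state, S^n and (SU)^n have the same b-marginals.

   Write SU = Q + D, where Q is SU between transient states and D collects the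
   transitions into absorbing states.  Absorbing rows of SU are identity rows,
   so (SU)^(n+1) = Q (SU)^n + D, and (SU)^n converges to (I - Q)^-1 D as soon as
   Q^n -> 0.  For substochastic Q this can only fail if some nonempty set X is
   closed (the Q-rows of X sum to 1 and stay in X): the states where the
   limiting row sum of Q^n is maximal and positive would form such a set.  Here
   no such X exists: an element of X with maximal b-component is saturated,
   since S-successors stay in X and only enlarge b; but then its successors are
   collapsed to absorbing states, which X avoids.

   The limit is rational because (I - Q)^-1 inverts a rational matrix. *)

From HB Require Import structures.
From mathcomp Require Import all_boot all_order all_algebra.
From mathcomp Require Import all_classical all_reals all_analysis.
Import Order.TTheory GRing.Theory Num.Theory.
Import numFieldNormedType.Exports.
Local Open Scope ring_scope.
Local Open Scope classical_set_scope.
Set Implicit Arguments. Unset Strict Implicit. Unset Printing Implicit Defensive.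

Section FmxAlgebra.
Variables (T : finType) (R : pzRingType).

Lemma sum_delta_l (s : T) (f : T -> R) : \sum_t (s == t)%:R * f t = f s.
Proof.
rewrite (bigD1 s) //= eqxx mul1r big1 ?addr0 // => t ts.
by rewrite eq_sym (negbTE ts) mul0r.
Qed.

Lemma sum_delta_r (s : T) (f : T -> R) : \sum_t f t * (t == s)%:R = f s.
Proof.
rewrite (bigD1 s) //= eqxx mulr1 big1 ?addr0 // => t ts.
by rewrite (negbTE ts) mulr0.
Qed.

Lemma fpowSE (A : fmx T R) n s t :
  fpow A n.+1 s t = \sum_k A s k * fpow A n k t.
Proof. by []. Qed.

Lemma fmulf1 (A : fmx T R) : fmul A (fid R) = A.
Proof. by apply/funext => s; apply/funext => t; exact: sum_delta_r. Qed.

End FmxAlgebra.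

Section NonnegativeFmx.
Variables (T : finType) (R : numDomainType) (A : fmx T R).
Hypothesis A_ge0 : forall s t, 0 <= A s t.

Lemma fpow_ge0 n s t : 0 <= fpow A n s t.
Proof.
elim: n s t => [|n IHn] s t; first exact: ler0n.
by apply: sumr_ge0 => k _; rewrite mulr_ge0.
Qed.

Lemma fpowS_ge n s u t : A s u * fpow A n u t <= fpow A n.+1 s t.
Proof.
rewrite [leRHS](bigD1 u) //= lerDl sumr_ge0 // => k _.
by rewrite mulr_ge0 ?fpow_ge0.
Qed.

Lemma fpowS_gt0P n s t :
  0 < fpow A n.+1 s t -> exists2 u, 0 < A s u & 0 < fpow A n u t.
Proof.
move=> /gt_eqF/negbT/eqP/psumr_neq0P[k _|k /= pos].
  by rewrite mulr_ge0 ?fpow_ge0.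
by move: pos; rewrite mulr_ge0_gt0 ?fpow_ge0 // => /andP[]; exists k.
Qed.

End NonnegativeFmx.

Section FmxMatrix.
Variables (T : finType) (F : fieldType).

Definition mx_of_fmx (A : fmx T F) : 'M[F]_#|{: T}| :=
  \matrix_(i, j) A (enum_val i) (enum_val j).

Definition finv (A : fmx T F) : fmx T F :=
  fun s t => invmx (mx_of_fmx A) (enum_rank s) (enum_rank t).

Lemma mx_of_fmx_rank (A : fmx T F) s t :
  mx_of_fmx A (enum_rank s) (enum_rank t) = A s t.
Proof. by rewrite mxE !enum_rankK. Qed.

Lemma sum_enum_rank (G : 'I_#|{: T}| -> F) : \sum_i G i = \sum_s G (enum_rank s).
Proof. by rewrite (reindex enum_rank) //; exact: onW_bij (enum_rank_bij _). Qed.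

Lemma mulmx_rank (M N : 'M[F]_#|{: T}|) s t :
  (M *m N) (enum_rank s) (enum_rank t) =
  \sum_k M (enum_rank s) (enum_rank k) * N (enum_rank k) (enum_rank t).
Proof. by rewrite mxE sum_enum_rank. Qed.

Lemma scalar_mx_rank s t :
  (1%:M : 'M[F]_#|{: T}|) (enum_rank s) (enum_rank t) = fid F s t.
Proof. by rewrite mxE (inj_eq enum_rank_inj). Qed.

Lemma fmulVf (A : fmx T F) : mx_of_fmx A \in unitmx -> fmul (finv A) A = fid F.
Proof.
move=> /mulVmx/matrixP unitA; apply/funext => s; apply/funext => t.
rewrite -scalar_mx_rank -unitA mulmx_rank; apply: eq_bigr => k _.
by rewrite mx_of_fmx_rank.
Qed.

Lemma fmulfV (A : fmx T F) : mx_of_fmx A \in unitmx -> fmul A (finv A) = fid F.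
Proof.
move=> /mulmxV/matrixP unitA; apply/funext => s; apply/funext => t.
rewrite -scalar_mx_rank -unitA mulmx_rank; apply: eq_bigr => k _.
by rewrite mx_of_fmx_rank.
Qed.

Lemma unitmx_fmx_ker0 (A : fmx T F) :
  (forall w : T -> F, (forall t, \sum_s w s * A s t = 0) -> forall s, w s = 0) ->
  mx_of_fmx A \in unitmx.
Proof.
move=> kerA; rewrite unitmxE unitfE.
apply/negP => /det0P[v /eqP v_neq0 /rowP vA].
apply: v_neq0; apply/rowP => i; rewrite mxE -(enum_valK i).
apply: (kerA (fun s => v 0 (enum_rank s))) => t.
move: (vA (enum_rank t)); rewrite !mxE sum_enum_rank.
by under eq_bigr do rewrite mx_of_fmx_rank.
Qed.

End FmxMatrix.

Section RationalImage.
Variable F : numFieldType.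

Definition rat_image : pred F := fun x => `[< exists q : rat, x = ratr q >].

Fact rat_image_subring : subring_closed rat_image.
Proof.
split; first by apply/asboolP; exists 1; rewrite rmorph1.
- move=> _ _ /asboolP[p ->] /asboolP[q ->]; apply/asboolP.
  by exists (p - q); rewrite rmorphB.
- move=> _ _ /asboolP[p ->] /asboolP[q ->]; apply/asboolP.
  by exists (p * q); rewrite rmorphM.
Qed.

HB.instance Definition _ :=
  GRing.isSubringClosed.Build F rat_image rat_image_subring.

Lemma finv_rat (T : finType) (A : fmx T F) :
  (forall s t, A s t \in rat_image) -> forall s t, finv A s t \in rat_image.
Proof.
move=> ratA s t.
have /boolp.choice[q qE] : forall ij : 'I_#|{: T}| * 'I_#|{: T}|,
    exists q : rat, mx_of_fmx A ij.1 ij.2 = ratr q.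
  by move=> [i j]; rewrite mxE; exact/asboolP/ratA.
rewrite /finv; have -> : mx_of_fmx A = map_mx ratr (\matrix_(i, j) q (i, j)).
  by apply/matrixP => i j; rewrite (qE (i, j)) !mxE.
by rewrite -map_invmx mxE; apply/asboolP; eexists.
Qed.

End RationalImage.

Arguments rat_image {F}.

Lemma cvg_sum (T : finType) (R : realType) (f : T -> nat -> R) (l : T -> R) :
  (forall i, f i @ \oo --> l i) -> (fun n => \sum_i f i n) @ \oo --> \sum_i l i.
Proof. by move=> fl; apply: (cvg_big add_continuous) => // i _; exact: fl. Qed.

Lemma cvg_sum0 (T : finType) (R : realType) (f : T -> nat -> R) :
  (forall i, f i @ \oo --> 0) -> (fun n => \sum_i f i n) @ \oo --> 0.
Proof. by move=> f0; have := cvg_sum f0; rewrite big1_eq. Qed.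

Section ContractingIteration.
Variables (T : finType) (R : realType) (Q : fmx T R).
Hypothesis Qpow_cvg0 : forall s t, (fun n => fpow Q n s t) @ \oo --> 0.

Let IQ : fmx T R := fun s t => fid R s t - Q s t.

Lemma unitmx_fid_sub : mx_of_fmx IQ \in unitmx.
Proof.
apply: unitmx_fmx_ker0 => w wIQ.
have wQ t : w t = \sum_s w s * Q s t.
  move: (wIQ t); rewrite /IQ /fid; under eq_bigr do rewrite mulrBr.
  by rewrite sumrB sum_delta_r => /eqP; rewrite subr_eq0 => /eqP.
have wQn n t : w t = \sum_s w s * fpow Q n s t.
  elim: n t => [|n IHn] t; first by rewrite /fid sum_delta_r.
  rewrite IHn; under [RHS]eq_bigr do rewrite mulr_sumr.
  rewrite exchange_big /=; apply: eq_bigr => k _.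
  by rewrite [w k]wQ mulr_suml; apply: eq_bigr => s _; rewrite mulrA.
move=> s; have wQn_cst : (fun n => \sum_k w k * fpow Q n k s) = fun=> w s.
  by apply/funext => n; rewrite -wQn.
have : (fun n => \sum_k w k * fpow Q n k s) @ \oo --> 0.
  by apply: cvg_sum0 => k; rewrite -(mulr0 (w k)); exact: cvgMl_tmp.
by rewrite wQn_cst; exact: cvg_unique _ (cvg_cst (w s)).
Qed.

Lemma affine_iter_cvg (r : T -> R) (x : nat -> T -> R) :
    (forall n s, x n.+1 s = \sum_k Q s k * x n k + r s) ->
  forall s, (fun n => x n s) @ \oo --> \sum_k finv IQ s k * r k.
Proof.
move=> xS; pose y s := \sum_k finv IQ s k * r k.
have yE s : y s = \sum_k Q s k * y k + r s.
  have IQy : \sum_j IQ s j * y j = r s.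
    rewrite -[RHS](sum_delta_l s) /y; under eq_bigr do rewrite mulr_sumr.
    rewrite exchange_big /=; apply: eq_bigr => k _.
    rewrite -[(s == k)%:R]/(fid R s k) -(fmulfV unitmx_fid_sub) mulr_suml.
    by apply: eq_bigr => j _; rewrite mulrA.
  rewrite -IQy /IQ /fid /=; under [X in _ + X]eq_bigr do rewrite mulrBl.
  by rewrite sumrB sum_delta_l addrC subrK.
have xy n s : x n s - y s = \sum_k fpow Q n s k * (x 0 k - y k).
  elim: n s => [|n IHn] s; first by rewrite /fid sum_delta_l.
  rewrite xS [y s]yE opprD addrACA subrr addr0 -sumrB.
  under eq_bigr do rewrite -mulrBr IHn mulr_sumr.
  rewrite exchange_big /=; apply: eq_bigr => j _.
  by rewrite mulr_suml; apply: eq_bigr => k _; rewrite mulrA.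
move=> s; rewrite -/(y s) -[y s]addr0.
under eq_fun => n do rewrite -(subrKC (y s) (x n s)) xy.
apply: cvgD; first exact: cvg_cst.
apply: cvg_sum0 => k; rewrite -(mul0r (x 0 k - y k)).
exact: cvgMr_tmp.
Qed.

End ContractingIteration.

Definition closed_set (T : finType) (R : numDomainType) (Q : fmx T R)
    (X : pred T) :=
  forall x, X x -> \sum_k Q x k = 1 /\ forall k, 0 < Q x k -> X k.

Section SubstochasticDecay.
Variables (T : finType) (R : realType) (Q : fmx T R).
Hypothesis Q_ge0 : forall s t, 0 <= Q s t.
Hypothesis Q_rowsum_le1 : forall s, \sum_t Q s t <= 1.

Let mass n s := \sum_t fpow Q n s t.
Let mass_lim s := inf (range (mass^~ s)).

Lemma mass_ge0 n s : 0 <= mass n s.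
Proof. by apply: sumr_ge0 => t _; exact: fpow_ge0. Qed.

Lemma mass_succ n s : mass n.+1 s = \sum_k Q s k * mass n k.
Proof.
rewrite /mass exchange_big /=; apply: eq_bigr => k _.
by rewrite mulr_sumr.
Qed.

Lemma mass0 s : mass 0 s = 1.
Proof.
by rewrite -(sum_delta_l s (fun=> 1)); apply: eq_bigr => t _; rewrite mulr1.
Qed.

Lemma mass_nonincreasing s : nonincreasing_seq (mass^~ s).
Proof.
apply/nonincreasing_seqP => n; elim: n s => [|n IHn] s.
  by rewrite mass_succ mass0; under eq_bigr do rewrite mass0 mulr1.
rewrite mass_succ [leRHS]mass_succ; apply: ler_sum => k _.
exact: ler_wpM2l.
Qed.

Lemma mass_cvg s : mass^~ s @ \oo --> mass_lim s.
Proof.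
apply: nonincreasing_cvgn; first exact: mass_nonincreasing.
by exists 0 => _ [n _ <-]; exact: mass_ge0.
Qed.

Lemma mass_lim_ge0 s : 0 <= mass_lim s.
Proof.
rewrite -(cvg_lim _ (@mass_cvg s)) //; apply: limr_ge.
  exact/cvg_ex/ex_intro/mass_cvg.
by apply: nearW => n; exact: mass_ge0.
Qed.

Lemma mass_lim_harmonic s : mass_lim s = \sum_k Q s k * mass_lim k.
Proof.
have shifted : (fun n => mass n.+1 s) @ \oo --> mass_lim s.
  by have := @mass_cvg s; rewrite -cvg_shiftS.
have harmonic : (fun n => mass n.+1 s) @ \oo --> \sum_k Q s k * mass_lim k.
  under eq_fun do rewrite mass_succ.
  by apply: cvg_sum => k; apply: cvgMl_tmp; exact: mass_cvg.
exact: cvg_unique _ shifted harmonic.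
Qed.

Lemma closed_set_mass_lim_max M :
  (forall k, mass_lim k <= M) -> 0 < M -> closed_set Q [pred x | mass_lim x == M].
Proof.
move=> le_M M_gt0 x /eqP xM.
have rowsum1 : \sum_k Q x k = 1.
  apply/le_anti; rewrite Q_rowsum_le1 -(ler_pM2r M_gt0) mul1r.
  rewrite -{1}xM mass_lim_harmonic mulr_suml; apply: ler_sum => k _.
  exact: ler_wpM2l.
split=> // k Qxk_gt0.
have gap0 : \sum_j Q x j * (M - mass_lim j) = 0.
  under eq_bigr do rewrite mulrBr.
  by rewrite sumrB -mulr_suml rowsum1 mul1r -mass_lim_harmonic xM subrr.
have gap_ge0 j : xpredT j -> 0 <= Q x j * (M - mass_lim j).
  by rewrite mulr_ge0 // subr_ge0.
have /eqP := psumr_eq0P gap_ge0 gap0 (i := k) isT.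
by rewrite mulf_eq0 (gt_eqF Qxk_gt0) /= subr_eq0 eq_sym.
Qed.

Hypothesis no_closed_set : forall X x, closed_set Q X -> ~~ X x.

Lemma mass_lim_eq0 s : mass_lim s = 0.
Proof.
have [x0 _ x0_max] := @arg_maxP _ _ _ s xpredT mass_lim isT.
apply/le_anti; rewrite mass_lim_ge0 andbT (le_trans (x0_max s isT)) //.
rewrite leNgt; apply/negP => M_gt0.
have := no_closed_set x0 (closed_set_mass_lim_max (fun k => x0_max k isT) M_gt0).
by rewrite /= eqxx.
Qed.

Lemma fpow_cvg0 s t : (fun n => fpow Q n s t) @ \oo --> 0.
Proof.
apply: (squeeze_cvgr (f := fun=> 0) (h := mass^~ s)); last 2 first.
- exact: cvg_cst.
- by rewrite -(mass_lim_eq0 s); exact: mass_cvg.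
apply: nearW => n; rewrite fpow_ge0 //= [leRHS](bigD1 t) //= lerDl.
by apply: sumr_ge0 => k _; exact: fpow_ge0.
Qed.

End SubstochasticDecay.

Section SmallStepChain.
Variables (Pk : finType) (R : realType) (B : {set Pk} -> {set Pk} -> R).
Hypothesis B_ge0 : forall a a', 0 <= B a a'.
Hypothesis B_stoch : forall a, \sum_(a' : {set Pk}) B a a' = 1.
Hypothesis B_empty : B finset.set0 finset.set0 = 1.

Local Notation state := (state Pk).
Local Notation S := (smallstep B).
Local Notation SU := (fmul (smallstep B) (Umx B)).

Definition collapse (k : state) : state :=
  if `[< saturated B k >] then (finset.set0, k.2) else k.

Lemma UmxE k t : Umx B k t = (t == collapse k)%:R.
Proof.
rewrite /Umx /collapse; case: ifP => _; case: t => t1 t2; case: k => k1 k2 /=;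
  by rewrite xpair_eqE andbC.
Qed.

Lemma collapse_id k : ~ saturated B k -> collapse k = k.
Proof. by move=> unsat_k; rewrite /collapse asboolF. Qed.

Lemma smallstep_ge0 s t : 0 <= S s t.
Proof. by rewrite mulr_ge0 ?ler0n. Qed.

Lemma smallstep_rowsum s : \sum_t S s t = 1.
Proof.
rewrite -[RHS](B_stoch s.1) -(pair_bigA _ (fun a c => S s (a, c))) /=.
apply: eq_bigr => a _; rewrite /smallstep /=.
by under eq_bigr do rewrite mulrC; rewrite sum_delta_r.
Qed.

Lemma smallstep_gt0_snd s u : 0 < S s u -> u.2 = s.2 :|: s.1.
Proof. by rewrite /smallstep; case: eqP => // _; rewrite mul0r ltxx. Qed.

Lemma B_set0 a' : a' != finset.set0 -> B finset.set0 a' = 0.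
Proof.
move=> a'_neq0; have := B_stoch finset.set0.
rewrite (bigD1 finset.set0) //= B_empty -[in RHS](addr0 1) => /addrI.
by move=> /psumr_eq0P-> // a _; exact: B_ge0.
Qed.

Lemma fpow_smallstep_set0 n c t :
  fpow S n (finset.set0, c) t = (t == (finset.set0, c))%:R.
Proof.
elim: n t => [|n IHn] t; first by rewrite /fid eq_sym.
rewrite /= /fmul (bigD1 (finset.set0, c)) //= IHn /smallstep /= finset.setU0 eqxx.
rewrite B_empty mulr1 mul1r big1 ?addr0 // => -[a c'] /= ne.
case: (eqVneq a finset.set0) => [a0|/B_set0->]; last by rewrite mulr0 mul0r.
by move: ne; rewrite a0 xpair_eqE eqxx /= => /negbTE->; rewrite !mul0r.
Qed.

Lemma saturated_set0 c : saturated B (finset.set0, c).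
Proof. by move=> n t; rewrite fpow_smallstep_set0 ltr0n; case: eqP => // -> _. Qed.

Lemma saturated_succ s u : saturated B s -> 0 < S s u -> saturated B u /\ u.2 = s.2.
Proof.
move=> sat_s Ssu; have u2 : u.2 = s.2 by apply: (sat_s 1%N); rewrite /= fmulf1.
split=> // n t Sut; rewrite u2; apply: (sat_s n.+1).
by apply: lt_le_trans (fpowS_ge smallstep_ge0 n s u t); rewrite mulr_gt0.
Qed.

Lemma SUE s t : SU s t = \sum_k S s k * (t == collapse k)%:R.
Proof. by apply: eq_bigr => k _; rewrite UmxE. Qed.

Lemma SU_ge0 s t : 0 <= SU s t.
Proof.
by rewrite SUE sumr_ge0 // => k _; rewrite mulr_ge0 ?smallstep_ge0 ?ler0n.
Qed.

Lemma SU_rowsum s : \sum_t SU s t = 1.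
Proof.
rewrite -(smallstep_rowsum s); under eq_bigr do rewrite SUE.
rewrite exchange_big /=; apply: eq_bigr => k _.
exact: (sum_delta_r (collapse k) (fun=> S s k)).
Qed.

Lemma smallstep_le_SU s u : S s u <= SU s (collapse u).
Proof.
rewrite SUE (bigD1 u) //= eqxx mulr1 lerDl sumr_ge0 // => k _.
by rewrite mulr_ge0 ?smallstep_ge0 ?ler0n.
Qed.

Lemma SU_saturated j k : saturated B j -> SU j k = (k == (finset.set0, j.2))%:R.
Proof.
move=> sat_j; rewrite SUE -[RHS]mul1r -(smallstep_rowsum j) mulr_suml.
apply: eq_bigr => i _; have [Sji_gt0|Sji_le0] := ltP 0 (S j i).
  have [sat_i i2] := saturated_succ sat_j Sji_gt0.
  by rewrite /collapse asboolT // i2.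
have -> : S j i = 0 by apply/le_anti; rewrite Sji_le0 smallstep_ge0.
by rewrite !mul0r.
Qed.

Lemma absorbingE (s : state) : absorbing s -> s = (finset.set0, s.2).
Proof. by case: s => a c /eqP /= ->. Qed.

Lemma SU_absorbing (s t : state) : absorbing s -> SU s t = (s == t)%:R.
Proof.
move=> abs_s; rewrite {1}(absorbingE abs_s) SU_saturated; last exact: saturated_set0.
by rewrite /= -(absorbingE abs_s) eq_sym.
Qed.

Lemma fpow_SU_absorbing n (s t : state) : absorbing s -> fpow SU n s t = (s == t)%:R.
Proof.
move=> abs_s; elim: n t => [|n IHn] t //.
rewrite fpowSE; under eq_bigr do rewrite (SU_absorbing _ abs_s).
by rewrite sum_delta_l IHn.
Qed.

(* SU = Qmx + Dmx: Qmx is the block Q padded with zeros, Dmx holds the columns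
   of the absorbing states, i.e. the blocks I and R. *)
Definition Qmx (s t : state) : R := if absorbing s || absorbing t then 0 else SU s t.
Definition Dmx (s t : state) : R := if absorbing t then SU s t else 0.

Lemma SU_split s t : SU s t = Qmx s t + Dmx s t.
Proof.
rewrite /Qmx /Dmx; case: (boolP (absorbing t)) => [abs_t|tr_t].
  by rewrite orbT add0r.
rewrite orbF addr0; case: ifPn => // abs_s.
have /negbTE st_neq : s != t by apply: contraNneq tr_t => <-.
by rewrite SU_absorbing // st_neq.
Qed.

Lemma Qmx_ge0 s t : 0 <= Qmx s t.
Proof. by rewrite /Qmx; case: ifP => _; rewrite ?SU_ge0. Qed.

Lemma Qmx_le_SU s t : Qmx s t <= SU s t.
Proof. by rewrite /Qmx; case: ifP => _; rewrite ?SU_ge0. Qed.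

Lemma Qmx_rowsum_le1 s : \sum_t Qmx s t <= 1.
Proof. by rewrite -(SU_rowsum s); apply: ler_sum => t _; exact: Qmx_le_SU. Qed.

Lemma closed_set_Qmx_SU X x k : closed_set Qmx X -> X x -> Qmx x k = SU x k.
Proof.
move=> closedX Xx.
have gap_ge0 j : xpredT j -> 0 <= SU x j - Qmx x j by rewrite subr_ge0 Qmx_le_SU.
have gap0 : \sum_j (SU x j - Qmx x j) = 0.
  by rewrite sumrB SU_rowsum (closedX x Xx).1 subrr.
by apply/eqP; rewrite eq_sym -subr_eq0 (psumr_eq0P gap_ge0 gap0 (i := k) isT).
Qed.

Lemma closed_set_succ X x u :
  closed_set Qmx X -> X x -> 0 < S x u -> X u /\ ~ saturated B u.
Proof.
move=> closedX Xx Sxu.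
have Qxu_gt0 : 0 < Qmx x (collapse u).
  rewrite (closed_set_Qmx_SU _ closedX Xx).
  exact: lt_le_trans Sxu (smallstep_le_SU x u).
have unsat_u : ~ saturated B u.
  move=> sat_u; move: Qxu_gt0.
  by rewrite /Qmx /collapse asboolT //= /absorbing eqxx orbT ltxx.
by split=> //; rewrite -(collapse_id unsat_u); exact: (closedX x Xx).2.
Qed.

Lemma Qmx_no_closed_set X x : closed_set Qmx X -> ~~ X x.
Proof.
move=> closedX; apply/negP => Xx.
have [s0 Xs0 s0_max] := @arg_maxnP _ x X (fun k : state => #|k.2|) Xx.
have reach n y t : X y -> y.2 = s0.2 -> 0 < fpow S n y t -> t.2 = s0.2.
  elim: n y => [|n IHn] y Xy y2; first by rewrite /= /fid ltr0n; case: eqP => // <-.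
  case/(fpowS_gt0P smallstep_ge0) => u Syu Sut.
  have [Xu _] := closed_set_succ closedX Xy Syu.
  have /= card_u := s0_max u Xu.
  apply: IHn Xu _ Sut; apply/esym/eqP.
  by rewrite eqEcard card_u andbT (smallstep_gt0_snd Syu) -y2 finset.subsetUl.
have sat_s0 : saturated B s0 by move=> n t; exact: reach n s0 t Xs0 erefl.
have : \sum_u S s0 u <> 0 by rewrite smallstep_rowsum; exact/eqP/oner_neq0.
case/psumr_neq0P => [u _|u /= Ss0u]; first exact: smallstep_ge0.
have [_ unsat_u] := closed_set_succ closedX Xs0 Ss0u.
by case: (saturated_succ sat_s0 Ss0u).
Qed.

Lemma fpow_SU_succ n s t :
  fpow SU n.+1 s t = \sum_k Qmx s k * fpow SU n k t + Dmx s t.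
Proof.
rewrite fpowSE; under eq_bigr do rewrite SU_split mulrDl.
rewrite big_split /= -[in RHS](sum_delta_r t (Dmx s)); congr (_ + _).
apply: eq_bigr => k _; rewrite /Dmx; case: ifP => abs_k; last by rewrite !mul0r.
by rewrite fpow_SU_absorbing.
Qed.

(* Inverted over all states; on the transient block this is (I - Q)^-1. *)
Definition Nmx : fmx state R := finv (fun s t => fid R s t - Qmx s t).

Definition SUlim (s t : state) : R := \sum_k Nmx s k * Dmx k t.

Lemma Qmx_pow_cvg0 s t : (fun n => fpow Qmx n s t) @ \oo --> 0.
Proof. exact: (fpow_cvg0 Qmx_ge0 Qmx_rowsum_le1 Qmx_no_closed_set). Qed.

Lemma fpow_SU_cvg s t : (fun n => fpow SU n s t) @ \oo --> SUlim s t.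
Proof.
exact: (affine_iter_cvg Qmx_pow_cvg0 (x := fun n s => fpow SU n s t)
  (fun n s => fpow_SU_succ n s t)).
Qed.

Lemma SUinfE s t : SUinf B s t = SUlim s t.
Proof. exact: (cvg_lim (@Rhausdorff R) (@fpow_SU_cvg s t)). Qed.

Lemma Nmx_unit : mx_of_fmx (fun s t => fid R s t - Qmx s t) \in unitmx.
Proof. exact: unitmx_fid_sub Qmx_pow_cvg0. Qed.

Lemma Nmx_absorbing_col s k : absorbing k -> Nmx s k = (s == k)%:R.
Proof.
move=> abs_k; move: (congr1 (fun A => A s k) (fmulVf Nmx_unit)) => /=.
rewrite /fmul /fid /Qmx abs_k /=; under eq_bigr do rewrite orbT subr0.
by rewrite sum_delta_r.
Qed.

Lemma Nmx_absorbing_row s k : absorbing s -> Nmx s k = (s == k)%:R.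
Proof.
move=> abs_s; move: (congr1 (fun A => A s k) (fmulfV Nmx_unit)) => /=.
rewrite /fmul /fid /Qmx abs_s /=; under eq_bigr do rewrite subr0.
by rewrite sum_delta_l.
Qed.

Lemma Nmx_transient_mulVf s t : ~~ absorbing s -> ~~ absorbing t ->
  \sum_(k | ~~ absorbing k) Nmx s k * ((k == t)%:R - SU k t) = (s == t)%:R.
Proof.
move=> tr_s tr_t; rewrite -[(s == t)%:R]/(fid R s t) -(fmulVf Nmx_unit).
rewrite /fmul /fid [RHS](bigID (@absorbing Pk)) /=.
rewrite [X in _ = X + _]big1 ?add0r => [|k abs_k].
  by apply: eq_bigr => k tr_k; rewrite /Qmx (negbTE tr_k) (negbTE tr_t).
have /negbTE -> : k != t by apply: contraNneq tr_t => <-.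
by rewrite /Qmx abs_k /= subr0 mulr0.
Qed.

Lemma Nmx_transient_mulfV s t : ~~ absorbing s -> ~~ absorbing t ->
  \sum_(k | ~~ absorbing k) ((s == k)%:R - SU s k) * Nmx k t = (s == t)%:R.
Proof.
move=> tr_s tr_t; rewrite -[(s == t)%:R]/(fid R s t) -(fmulfV Nmx_unit).
rewrite /fmul /fid [RHS](bigID (@absorbing Pk)) /=.
rewrite [X in _ = X + _]big1 ?add0r => [|k abs_k].
  by apply: eq_bigr => k tr_k; rewrite /Qmx (negbTE tr_k) (negbTE tr_s).
have /negbTE -> : s != k by apply: contraNneq tr_s => ->.
by rewrite /Qmx abs_k orbT subr0 mul0r.
Qed.

Lemma SUlim_transient s t : ~~ absorbing t -> SUlim s t = 0.
Proof.
by move=> tr_t; rewrite /SUlim big1 // => k _; rewrite /Dmx (negbTE tr_t) mulr0.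
Qed.

Lemma SUlimE s t : SUlim s t =
  if absorbing s then (s == t)%:R
  else if absorbing t then \sum_(k | ~~ absorbing k) Nmx s k * SU k t else 0.
Proof.
case: (boolP (absorbing t)) => [abs_t|tr_t]; last first.
  rewrite SUlim_transient //; case: ifP => // abs_s.
  by have /negbTE -> : s != t by apply: contraNneq tr_t => <-.
rewrite /SUlim; case: ifPn => [abs_s|tr_s].
  under eq_bigr do rewrite Nmx_absorbing_row //.
  by rewrite sum_delta_l /Dmx abs_t SU_absorbing.
rewrite (bigID (@absorbing Pk)) /= [X in X + _]big1 ?add0r => [|k abs_k].
  by apply: eq_bigr => k _; rewrite /Dmx abs_t.
have /negbTE sk_neq : s != k by apply: contraNneq tr_s => ->.
by rewrite Nmx_absorbing_col // sk_neq mul0r.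
Qed.

Hypothesis B_rat : forall a a', exists q : rat, B a a' = ratr q.

Lemma SU_rat s t : SU s t \in rat_image.
Proof.
apply: rpred_sum => k _; rewrite UmxE rpredM ?rpred_nat // rpredM ?rpred_nat //.
exact/asboolP/B_rat.
Qed.

Lemma SUlim_rat s t : SUlim s t \in rat_image.
Proof.
have Dmx_rat s' t' : Dmx s' t' \in rat_image.
  by rewrite /Dmx; case: ifP => _; rewrite ?rpred0 ?SU_rat.
apply: rpred_sum => k _; rewrite rpredM ?Dmx_rat //.
apply: finv_rat => s' t'; rewrite rpredB ?rpred_nat // /Qmx.
by case: ifP => _; rewrite ?rpred0 ?SU_rat.
Qed.

Definition snd_mass (P : fmx state R) n s c :=
  \sum_(a : {set Pk}) fpow P n s (a, c).

Lemma snd_mass0 P s c : snd_mass P 0 s c = (s.2 == c)%:R.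
Proof.
case: s => a b; rewrite /snd_mass /= /fid (bigD1 a) //= xpair_eqE eqxx /=.
by rewrite big1 ?addr0 // => a' a'_neq; rewrite xpair_eqE eq_sym (negbTE a'_neq).
Qed.

Lemma snd_mass_succ P n s c :
  snd_mass P n.+1 s c = \sum_k P s k * snd_mass P n k c.
Proof.
rewrite /snd_mass; under eq_bigr do rewrite fpowSE.
by rewrite exchange_big; apply: eq_bigr => k _; rewrite mulr_sumr.
Qed.

Lemma snd_mass_SU_saturated n j c :
  saturated B j -> snd_mass SU n.+1 j c = snd_mass SU n (finset.set0, j.2) c.
Proof.
move=> sat_j; rewrite snd_mass_succ.
by under eq_bigr do rewrite (SU_saturated _ sat_j) eq_sym; rewrite sum_delta_l.
Qed.

Lemma snd_mass_SU_collapse n k c :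
  snd_mass SU n (collapse k) c = snd_mass SU n k c.
Proof.
rewrite /collapse; case: asboolP => // sat_k.
case: n => [|n]; first by rewrite !snd_mass0.
rewrite (snd_mass_SU_saturated _ _ sat_k) snd_mass_SU_saturated //.
exact: saturated_set0.
Qed.

Lemma snd_mass_SU n s c : snd_mass SU n s c = snd_mass S n s c.
Proof.
elim: n s => [|n IHn] s; first by rewrite !snd_mass0.
rewrite !snd_mass_succ; under eq_bigr do rewrite SUE mulr_suml.
rewrite exchange_big /=; apply: eq_bigr => j _.
rewrite (eq_bigr (fun k => S s j * snd_mass SU n k c * (k == collapse j)%:R))
  => [|k _].
  by rewrite sum_delta_r snd_mass_SU_collapse IHn.
by rewrite mulrAC.
Qed.

Lemma snd_mass_smallstep_cvg a b c :
  (fun n => \sum_(a' : {set Pk}) fpow S n (a, b) (a', c)) @ \oo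
    --> SUinf B (a, b) (finset.set0, c).
Proof.
have -> : (fun n => \sum_(a' : {set Pk}) fpow S n (a, b) (a', c)) =
    fun n => snd_mass SU n (a, b) c by apply/funext => n; rewrite snd_mass_SU.
have -> : SUinf B (a, b) (finset.set0, c) = \sum_(a' : {set Pk}) SUlim (a, b) (a', c).
  rewrite SUinfE (bigD1 finset.set0) //= big1 ?addr0 // => a' a'_neq0.
  exact: SUlim_transient.
by apply: cvg_sum => a'; exact: fpow_SU_cvg.
Qed.

End SmallStepChain.

Theorem theorem4p7 (Pk : finType) (R : realType)
  (B : {set Pk} -> {set Pk} -> R)
  (B_ge0 : forall a a', 0 <= B a a')
  (B_stoch : forall a, \sum_(a' : {set Pk}) B a a' = 1)
  (B_rat : forall a a', exists q : rat, B a a' = ratr q)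
  (B_empty : B finset.set0 finset.set0 = 1) :
  let S := smallstep B in
  let SU := fmul S (Umx B) in
  (* (SU)^n converges entrywise to (SU)^∞ *)
  (forall s t : state Pk, (fun n : nat => (fpow SU n s t : R)) @ \oo --> SUinf B s t) /\
  (* main identity, including existence of the left-hand limit *)
  (forall a b b' : {set Pk},
     (fun n : nat => (\sum_(a' : {set Pk}) fpow S n (a, b) (a', b') : R)) @ \oo
       --> SUinf B (a, b) (finset.set0, b')) /\
  (* block form SU = [I 0; R Q] with absorbing states (∅,c) *)
  (forall s t : state Pk, absorbing s -> SU s t = (s == t)%:R) /\
  (* closed form: I - Q is invertible with inverse N, and
     (SU)^∞ = [I 0; N R 0] *)
  (exists N : state Pk -> state Pk -> R,
     (forall s t : state Pk, ~~ absorbing s -> ~~ absorbing t ->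
        \sum_(k : state Pk | ~~ absorbing k) N s k * ((k == t)%:R - SU k t)
          = (s == t)%:R) /\
     (forall s t : state Pk, ~~ absorbing s -> ~~ absorbing t ->
        \sum_(k : state Pk | ~~ absorbing k) ((s == k)%:R - SU s k) * N k t
          = (s == t)%:R) /\
     (forall s t : state Pk,
        SUinf B s t =
          if absorbing s then (s == t)%:R
          else if absorbing t then
                 \sum_(k : state Pk | ~~ absorbing k) N s k * SU k t
               else 0)) /\
  (* rational entries *)
  (forall s t : state Pk, exists q : rat, SUinf B s t = ratr q).
Proof.
move=> S SU; split; [|split; [|split; [|split]]].
- by move=> s t; rewrite SUinfE //; exact: fpow_SU_cvg.
- exact: snd_mass_smallstep_cvg.
- exact: SU_absorbing.
- exists (Nmx B); split; [|split].
  + exact: Nmx_transient_mulVf.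
  + exact: Nmx_transient_mulfV.
  + by move=> s t; rewrite SUinfE // SUlimE.
- by move=> s t; apply/asboolP; rewrite SUinfE //; exact: SUlim_rat.
Qed.
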